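(* Let $\mathbf{F}$ be a finite field with $q$ elements, $n\ge1$, $V_j=\operatorname{span}(b_1,\dots,b_j)\subseteq\mathbf{F}^n$ for the standard basis, and $r\ge0$. Let $T\colon V_{n-1}\to V_{n-1}$ be a semi-idempotent linear map of rank $\le r$. For $f\colon\mathbf{Z}_{\ge0}\to\mathbf{Z}$ put \[ E_n(f,T)=\sum_{\substack{S\colon V_n\to V_n\ \text{semi-idempotent}\\ \operatorname{rank}S\le r,\ S|_{V_{n-1}}=T}}\mu(\mathrm{srk}\,S)\,f(\operatorname{rank}S), \] where $S|_{V_{n-1}}=T$ means $S(v)=T(v)$ for all $v\in V_{n-1}$. Then (1) if $\operatorname{rank}T\le r-1$, $E_n(f,T)=\mu(\mathrm{srk}\,T)\,q^{\operatorname{rank}T}\big(f(\operatorname{rank}T)-f(\operatorname{rank}T+1)\big)$; (2) if $\operatorname{rank}T=r$, $E_n(f,T)=\mu(\mathrm{srk}\,T)\,q^{\operatorname{rank}T}f(\operatorname{rank}T)$.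
   Context: A linear operator $S$ on a finite-dimensional space $V$ is semi-idempotent if $V=X\oplus Y$ with $X,Y$ $S$-stable, $S|_X=\mathrm{id}$ and $S|_Y$ nilpotent. $\mathrm{srk}$ is the stable rank: rank of the $j$-th power for $j\gg0$. $\mu(i)=(-1)^iq^{\binom i2}$. *)

From HB Require Import structures.
From mathcomp Require Import all_boot all_order all_algebra.
From mathcomp Require Import boolp.
Set Implicit Arguments. Unset Strict Implicit. Unset Printing Implicit Defensive.
Import GRing.Theory Num.Theory.
Local Open Scope ring_scope.

(* Linear maps on F^n are matrices acting on row vectors: v |-> v *m S. *)

(* S is semi-idempotent: F^n = X (+) Y with X, Y S-stable, S = id on X,
   S nilpotent on Y.  Subspaces are row spaces of square matrices. *)
Definition semi_idempotent (F : fieldType) (n : nat) (S : 'M[F]_n) : Prop :=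
  exists X Y : 'M[F]_n,
    [/\ (X + Y == 1%:M)%MS /\ mxdirect (X + Y), stablemx X S, stablemx Y S,
        (forall v : 'rV[F]_n, (v <= X)%MS -> v *m S = v) &
        exists k : nat, forall v : 'rV[F]_n, (v <= Y)%MS -> v *m S ^+ k = 0].

(* stable rank: rank of S^j for j >> 0; the ranks stabilize by j = n *)
Definition srk (F : fieldType) (n : nat) (S : 'M[F]_n) : nat := \rank (S ^+ n).

Definition mu (q i : nat) : int := (-1) ^+ i * (q ^ 'C(i, 2))%:Z.

Definition restricts_to (F : fieldType) (m : nat) (S : 'M[F]_(m + 1)) (T : 'M[F]_m)
  : Prop :=
  forall v : 'rV[F]_m, row_mx v (0 : 'rV[F]_1) *m S = row_mx (v *m T) 0.

(* E_n(f,T) with n = m + 1 *)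
Definition E_sum (F : finFieldType) (m r : nat) (f : nat -> int) (T : 'M[F]_m) : int :=
  \sum_(S : 'M[F]_(m + 1) |
          `[< semi_idempotent S /\ (\rank S <= r)%N /\ restricts_to S T >])
     mu #|F| (srk S) * f (\rank S).

From mathcomp Require Import all_boot all_order all_algebra.
From mathcomp Require Import boolp.
From mathcomp Require Import ring mxabelem.
Set Implicit Arguments. Unset Strict Implicit. Unset Printing Implicit Defensive.
Import GRing.Theory.
Local Open Scope ring_scope.

(* A map S on F^(m+1) restricting to T is a block matrix [[T, 0], [b, c]]
   (matrices act on row vectors).  S is semi-idempotent iff S^(N+1) = S^N for
   N >= m + 1, so only c = 0 (any b) and c = 1 with b T^m = 0 occur.  For
   c = 0, srk S = srk T and rank S is rank T or rank T + 1 as b lies in the row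
   space of T or not (q^(rank T), resp. q^m - q^(rank T), choices); for c = 1,
   rank S = rank T + 1 and srk S = srk T + 1 (q^(m - srk T) choices).  As
   mu(k+1) = -q^k mu(k) and q^m = q^(srk T) q^(m - srk T), all terms of rank
   rank T + 1 add up to -q^(rank T) mu(srk T) f(rank T + 1). *)

Lemma exprS_fixed (R : pzSemiRingType) (x : R) k i :
  (k <= i)%N -> x ^+ k.+1 = x ^+ k -> x ^+ i.+1 = x ^+ i.
Proof.
move=> /subnK <- fix_k; elim: (i - k)%N => [|d IHd] //.
by rewrite addSn exprS IHd -exprS.
Qed.

Section PowerStabilization.
Variables (F : fieldType) (n : nat) (A : 'M[F]_n).

Lemma exprS_submx j : (A ^+ j.+1 <= A ^+ j)%MS.
Proof. by rewrite exprS -mulmxE submxMl. Qed.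

Lemma exprS_submx_stable j i : (j <= i)%N ->
  (A ^+ j <= A ^+ j.+1)%MS -> (A ^+ i <= A ^+ i.+1)%MS.
Proof.
move=> /subnK <-; elim: (i - j)%N => [|d IHd] // sub_j.
by rewrite addSn [_ ^+ _.+1]exprSr [_ ^+ _.+2]exprSr -!mulmxE submxMr ?IHd.
Qed.

(* The ranks of A^0, A^1, ... decrease strictly until the first j with
   A^j <= A^(j+1); hence that j is at most n. *)
Lemma expr_submx_exists : exists2 j, (j <= n)%N & (A ^+ j <= A ^+ j.+1)%MS.
Proof.
case: (boolP [exists j : 'I_n.+1, (A ^+ j <= A ^+ j.+1)%MS]).
  by case/existsP=> j sub_j; exists j; rewrite // -ltnS.
rewrite negb_exists => /forallP no_stab.
suff /(_ n.+1 (leqnn _)) :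
    forall j, (j <= n.+1)%N -> (\rank (A ^+ j) + j <= n)%N.
  by rewrite addnS ltnNge leq_addl.
elim=> [|j IHj] lt_j; first by rewrite expr0 addn0 mxrank1.
have rank_lt : (\rank (A ^+ j.+1) < \rank (A ^+ j))%N.
  have : (A ^+ j.+1 < A ^+ j)%MS.
    by rewrite ltmxE exprS_submx (no_stab (Ordinal lt_j)).
  by rewrite ltmxErank => /andP[].
by rewrite addnS; apply: leq_trans (IHj (ltnW lt_j)); rewrite ltn_add2r.
Qed.

Lemma submx_expr_dim i : (n <= i)%N -> (A ^+ n <= A ^+ i)%MS.
Proof.
have [j le_jn sub_j] := expr_submx_exists.
move=> /subnK <-; elim: (i - n)%N => [|d IHd] //.
apply: submx_trans IHd _; rewrite addSn.
by apply: (exprS_submx_stable _ sub_j); apply: leq_trans (leq_addl _ _).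
Qed.

Lemma expr_fixed_dim k : A ^+ k.+1 = A ^+ k -> A ^+ n.+1 = A ^+ n.
Proof.
move=> fix_k; have /submxP [D A_n] := submx_expr_dim (leq_addr k n).
by rewrite exprSr A_n mulmxE -mulrA -exprSr (exprS_fixed (leq_addl n k) fix_k).
Qed.

End PowerStabilization.

(* Any k with S^(k+1) = S^k yields the decomposition X = im S^k,
   Y = ker S^k (Fitting). *)
Section Fitting.
Variables (F : fieldType) (n k : nat) (S : 'M[F]_n).
Hypothesis fix_k : S ^+ k.+1 = S ^+ k.

Lemma expr_fixed_row (v : 'rV_n) : (v <= S ^+ k)%MS -> v *m S = v.
Proof. by move=> /submxP [w ->]; rewrite -mulmxA mulmxE -exprSr fix_k. Qed.

Lemma capmx_expr_kermx : (S ^+ k :&: kermx (S ^+ k) = 0)%MS.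
Proof.
set Z := (S ^+ k :&: _)%MS.
have Z_fixed j : Z *m S ^+ j = Z.
  elim: j => [|j IHj]; first by rewrite expr0 mulmx1.
  by rewrite exprSr -mulmxE mulmxA IHj; apply/row_matrixP => i;
    rewrite row_mul expr_fixed_row // (submx_trans (row_sub i Z)) ?capmxSl.
by rewrite -(Z_fixed k); apply/sub_kermxP; apply: capmxSr.
Qed.

Lemma addsmx_expr_kermx : (S ^+ k + kermx (S ^+ k) == 1%:M)%MS.
Proof.
rewrite -(mxrank_leqif_eq (submx1 _)).2 mxrank1.
have := mxrank_sum_cap (S ^+ k) (kermx (S ^+ k)).
rewrite capmx_expr_kermx mxrank0 addn0 mxrank_ker subnKC ?rank_leq_row //.
by move=> ->.
Qed.

Lemma expr_fixed_semi_idempotent : semi_idempotent S.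
Proof.
exists (S ^+ k), (kermx (S ^+ k)); split.
- by rewrite addsmx_expr_kermx mxdirect_addsE /= !mxdirect_trivial
    capmx_expr_kermx eqxx.
- by rewrite mulmxE -exprSr fix_k.
- apply/sub_kermxP; rewrite -mulmxA mulmxE -exprS exprSr -mulmxE mulmxA.
  by rewrite mulmx_ker mul0mx.
- exact: expr_fixed_row.
- by exists k => v /sub_kermxP.
Qed.

End Fitting.

Lemma semi_idempotent_expr_fixed (F : fieldType) n (S : 'M[F]_n) :
  semi_idempotent S -> exists k, S ^+ k.+1 = S ^+ k.
Proof.
case=> X [Y [[/andP[_ full] _] _ _ X_fixed [k Y_nil]]]; exists k.
apply/row_matrixP => i; rewrite !rowE.
have : ((delta_mx 0 i : 'rV_n) <= X + Y)%MS := submx_trans (submx1 _) full.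
case/sub_addsmxP=> u ->.
have Xu_fixed j : u.1 *m X *m S ^+ j = u.1 *m X.
  elim: j => [|j IHj]; first by rewrite expr0 mulmx1.
  by rewrite exprS -mulmxE mulmxA X_fixed ?submxMl.
rewrite !mulmxDl !Xu_fixed exprSr -mulmxE mulmxA.
by rewrite Y_nil ?submxMl // mul0mx.
Qed.

Lemma semi_idempotentP (F : fieldType) n N (S : 'M[F]_n) : (n <= N)%N ->
  semi_idempotent S <-> S ^+ N.+1 = S ^+ N.
Proof.
move=> le_nN; split; last exact: expr_fixed_semi_idempotent.
move=> /semi_idempotent_expr_fixed [k /expr_fixed_dim fix_n].
exact: exprS_fixed fix_n.
Qed.

Section LowerBlockRank.
Variables (F : fieldType) (m : nat).

Lemma mxrank_lblock0 p (X : 'M[F]_(p, m)) (y : 'rV[F]_m) :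
  \rank (block_mx X 0 y (0 : 'M_1)) = (\rank X + ~~ (y <= X)%MS)%N.
Proof.
rewrite block_mxEh col_mx0 rank_row_mx0 -addsmxE.
have [y_sub | y_nsub] := boolP (y <= X)%MS.
  by rewrite addn0 (addsmx_idPl y_sub).
rewrite addn1; apply/eqP; rewrite eqn_leq; apply/andP; split.
  apply: leq_trans (mxrank_adds_leqif X y) _.
  by rewrite -[(\rank X).+1]addn1 leq_add2l rank_leq_row.
have : (X < X + y)%MS by rewrite ltmxE addsmxSl addsmx_sub submx_refl.
by rewrite ltmxErank => /andP[].
Qed.

Lemma mxrank_lblock1 (X : 'M[F]_m) (y : 'rV[F]_m) :
  \rank (block_mx X 0 y (1%:M : 'M_1)) = (\rank X).+1.
Proof.
have -> : block_mx X 0 y (1%:M : 'M_1) =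
    block_mx X 0 0 1%:M *m block_mx 1%:M 0 y (1%:M : 'M_1).
  by rewrite mulmx_block !mul0mx !mulmx0 !mulmx1 !mul1mx !addr0 !add0r.
rewrite mxrankMfree ?rank_diag_block_mx ?mxrank1 ?addn1 //.
by rewrite row_free_unit unitmxE det_lblock !det1 mulr1 unitr1.
Qed.

End LowerBlockRank.

Section Extension.
Variables (F : fieldType) (m : nat) (T : 'M[F]_m).

Definition ext_mx (b : 'rV[F]_m) (c : F) : 'M[F]_(m + 1) := block_mx T 0 b c%:M.

Lemma ext_mx_restricts b c : restricts_to (ext_mx b c) T.
Proof. by move=> v; rewrite mul_row_block !mul0mx !mulmx0 !addr0. Qed.

Lemma restricts_toE S :
  restricts_to S T -> S = ext_mx (dlsubmx S) (drsubmx S 0 0).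
Proof.
move=> S_T; rewrite /ext_mx -mx11_scalar -[LHS]submxK.
have row_S i :
    row_mx (row i (ulsubmx S)) (row i (ursubmx S)) = row_mx (row i T) 0.
  have := S_T 'e_i.
  by rewrite -{1}[S]submxK mul_row_block !mul0mx !addr0 -!rowE.
congr block_mx; apply/row_matrixP => i; rewrite ?row0.
- by case/eq_row_mx: (row_S i).
- by case/eq_row_mx: (row_S i).
Qed.

Lemma ext_mxK b c : (dlsubmx (ext_mx b c), drsubmx (ext_mx b c) 0 0) = (b, c).
Proof. by rewrite block_mxKdl block_mxKdr mxE eqxx mulr1n. Qed.

Lemma ext_mx0_exprS b j :
  ext_mx b 0 ^+ j.+1 = block_mx (T ^+ j.+1) 0 (b *m T ^+ j) 0.
Proof.
elim: j => [|j IHj]; first by rewrite expr1 expr0 mulmx1 /ext_mx raddf0.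
rewrite exprSr IHj /ext_mx raddf0 -mulmxE mulmx_block.
by rewrite !mul0mx !mulmx0 !addr0 -mulmxA !mulmxE -!exprSr.
Qed.

Lemma ext_mx1_expr b j :
  ext_mx b 1 ^+ j = block_mx (T ^+ j) 0 (b *m \sum_(i < j) T ^+ i) 1%:M.
Proof.
elim: j => [|j IHj].
  by rewrite !expr0 big_ord0 mulmx0; exact: (scalar_mx_block m 1 (1 : F)).
rewrite exprSr IHj /ext_mx -mulmxE mulmx_block.
rewrite !mul0mx !mulmx0 !mul1mx !addr0 add0r mulmxE -exprSr; congr block_mx.
rewrite big_ord_recl expr0 mulmxDr mulmx1 addrC; congr (_ + _).
rewrite -mulmxA mulmxE mulr_suml; congr (_ *m _).
by apply: eq_bigr => i _; rewrite -exprSr.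
Qed.

Lemma ext_mx_expr b c j :
  exists B, ext_mx b c ^+ j = block_mx (T ^+ j) 0 B (c ^+ j)%:M.
Proof.
elim: j => [|j [B IHj]].
  by exists 0; rewrite !expr0; exact: (scalar_mx_block m 1 (1 : F)).
exists (B *m T + (c ^+ j)%:M *m b).
rewrite exprSr IHj /ext_mx -mulmxE mulmx_block.
rewrite !mul0mx !mulmx0 !addr0 mulmxE -exprSr; congr block_mx.
by rewrite add0r -scalar_mxM exprSr.
Qed.

(* The corner of (ext_mx b c)^j is c^j, so S^(N+1) = S^N forces
   c^(N+1) = c^N. *)
Lemma ext_mx_not_semi_idempotent b c :
  c != 0 -> c != 1 -> ~ semi_idempotent (ext_mx b c).
Proof.
move=> c_neq0 c_neq1 /(semi_idempotentP _ (leqnn _)).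
have [B1 ->] := ext_mx_expr b c (m + 1).+1.
have [B2 ->] := ext_mx_expr b c (m + 1).
case/eq_block_mx => _ _ _ /(congr1 (fun M : 'M_1 => M 0 0)) /eqP.
rewrite !mxE /= !mulr1n exprSr -subr_eq0 -{2}[c ^+ _]mulr1 -mulrBr.
by rewrite mulf_eq0 expf_eq0 subr_eq0 (negbTE c_neq0) (negbTE c_neq1) andbF.
Qed.

Section FixedPower.
Hypothesis fix_T : T ^+ m.+1 = T ^+ m.

Lemma ext_mx0_semi_idempotent b : semi_idempotent (ext_mx b 0).
Proof.
apply/(semi_idempotentP _ (eq_leq (addn1 m))); rewrite !ext_mx0_exprS.
by rewrite [T ^+ m.+2]exprS fix_T -exprS fix_T.
Qed.

Lemma ext_mx1_semi_idempotentP b :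
  semi_idempotent (ext_mx b 1) <-> b *m T ^+ m = 0.
Proof.
rewrite (semi_idempotentP _ (eq_leq (addn1 m))) !ext_mx1_expr.
rewrite (big_ord_recr m.+1) /= mulmxDr [T ^+ m.+2]exprS fix_T -exprS fix_T.
split=> [/eq_block_mx [_ _ + _] | ->]; last by rewrite addr0.
by rewrite -[RHS]addr0 => /addrI.
Qed.

Let srk_ext_mx b c : srk (ext_mx b c) = \rank (ext_mx b c ^+ m.+1).
Proof. by rewrite /srk (congr1 (GRing.exp _) (addn1 m)). Qed.

Lemma mxrank_ext_mx0 b : \rank (ext_mx b 0) = (\rank T + ~~ (b <= T)%MS)%N.
Proof. by rewrite /ext_mx raddf0 mxrank_lblock0. Qed.

Lemma mxrank_ext_mx1 b : \rank (ext_mx b 1) = (\rank T).+1.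
Proof. exact: mxrank_lblock1. Qed.

Lemma srk_ext_mx0 b : srk (ext_mx b 0) = srk T.
Proof.
by rewrite srk_ext_mx ext_mx0_exprS mxrank_lblock0 fix_T submxMl addn0.
Qed.

Lemma srk_ext_mx1 b : srk (ext_mx b 1) = (srk T).+1.
Proof. by rewrite srk_ext_mx ext_mx1_expr mxrank_lblock1 fix_T. Qed.

End FixedPower.
End Extension.

Section RowCounting.
Variable F : finFieldType.

Lemma card_submx m n (A : 'M[F]_(m, n)) :
  #|[pred b : 'rV[F]_n | (b <= A)%MS]| = (#|F| ^ \rank A)%N.
Proof. by rewrite -card_rowg; apply: eq_card => b; rewrite !inE. Qed.

Lemma card_nsubmx m n (A : 'M[F]_(m, n)) :
  #|[pred b : 'rV[F]_n | ~~ (b <= A)%MS]| = (#|F| ^ n - #|F| ^ \rank A)%N.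
Proof.
rewrite -(card_submx A) -[n in (#|F| ^ n)%N]mul1n -card_mx.
by rewrite -(cardC [pred b : 'rV[F]_n | (b <= A)%MS]) addKn.
Qed.

Lemma card_kermx m n (A : 'M[F]_(m, n)) :
  #|[pred b : 'rV[F]_m | b *m A == 0]| = (#|F| ^ (m - \rank A))%N.
Proof.
rewrite -mxrank_ker -card_submx; apply: eq_card => b.
by rewrite !inE sub_kermx.
Qed.

End RowCounting.

Lemma mu_succ q k : mu q k.+1 = - (mu q k * (q ^ k)%:Z).
Proof. by rewrite /mu binS bin1 expnD PoszM exprS mulN1r mulrA !mulNr. Qed.

Section ExtensionSum.
Variables (F : finFieldType) (m r : nat) (T : 'M[F]_m) (f : nat -> int).
Hypotheses (fix_T : T ^+ m.+1 = T ^+ m) (rank_T : (\rank T <= r)%N).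

Let q := #|F|.

Definition ext_term (b : 'rV[F]_m) (c : F) : int :=
  let S := ext_mx T b c in
  if `[< semi_idempotent S /\ (\rank S <= r)%N /\ restricts_to S T >]
  then mu q (srk S) * f (\rank S) else 0.

Lemma E_sum_pairs : E_sum r f T = \sum_(x : 'rV[F]_m * F) ext_term x.1 x.2.
Proof.
rewrite /E_sum (reindex_onto (fun x : 'rV[F]_m * F => ext_mx T x.1 x.2)
                 (fun S => (dlsubmx S, drsubmx S 0 0))) /=; last first.
  by move=> S /asboolP [_ [_ /restricts_toE]] <-.
rewrite big_mkcond; apply: eq_bigr => -[b c] _.
by rewrite /ext_term /= ext_mxK eqxx andbT.
Qed.

Lemma ext_term_eq0 b c : c != 0 -> c != 1 -> ext_term b c = 0.
Proof.
move=> c_neq0 c_neq1; rewrite /ext_term asboolF // => -[S_semi _].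
exact: ext_mx_not_semi_idempotent S_semi.
Qed.

Lemma E_sum_ext_term : E_sum r f T = \sum_b ext_term b 0 + \sum_b ext_term b 1.
Proof.
rewrite E_sum_pairs -pair_bigA exchange_big (bigD1 0) //= (bigD1 1) /=;
  last by rewrite oner_neq0.
rewrite [X in _ + (_ + X)]big1 ?addr0 // => c /andP[c_neq1 c_neq0].
by apply: big1 => b _; apply: ext_term_eq0.
Qed.

Lemma ext_term0 b : ext_term b 0 =
  if (\rank T + ~~ (b <= T)%MS <= r)%N
  then mu q (srk T) * f (\rank T + ~~ (b <= T)%MS) else 0.
Proof.
rewrite /ext_term /= mxrank_ext_mx0 srk_ext_mx0 //.
case: (boolP (_ <= r)%N) => rank_le; last by rewrite asboolF // => -[_ []].
rewrite asboolT //; split; first exact: ext_mx0_semi_idempotent.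
by split; last apply: ext_mx_restricts.
Qed.

Lemma ext_term1 b : ext_term b 1 =
  if (b *m T ^+ m == 0) && (\rank T < r)%N
  then mu q (srk T).+1 * f (\rank T).+1 else 0.
Proof.
rewrite /ext_term /= mxrank_ext_mx1 srk_ext_mx1 //.
have [b_ker | b_nker] /= := eqVneq (b *m T ^+ m) 0; last first.
  rewrite asboolF // => -[/(ext_mx1_semi_idempotentP fix_T)/eqP].
  by rewrite (negPf b_nker).
case: (boolP (_ < r)%N) => rank_lt; last by rewrite asboolF // => -[_ []].
rewrite asboolT //; split; first exact/(ext_mx1_semi_idempotentP fix_T).
by split; last apply: ext_mx_restricts.
Qed.

Lemma sum_ext_term0 : \sum_b ext_term b 0 =
  (mu q (srk T) * f (\rank T)) *+ q ^ \rank T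
  + (if (\rank T < r)%N then mu q (srk T) * f (\rank T).+1 else 0)
      *+ (q ^ m - q ^ \rank T).
Proof.
rewrite (bigID (fun b => (b <= T)%MS)) /=.
under eq_bigr => b b_sub do rewrite ext_term0 b_sub addn0 rank_T.
under [X in _ + X]eq_bigr => b b_nsub do rewrite ext_term0 b_nsub addn1.
by rewrite !sumr_const card_submx card_nsubmx.
Qed.

Lemma sum_ext_term1 : \sum_b ext_term b 1 =
  (if (\rank T < r)%N then mu q (srk T).+1 * f (\rank T).+1 else 0)
    *+ q ^ (m - srk T).
Proof.
under eq_bigr => b _ do rewrite ext_term1.
case: (boolP (\rank T < r)%N) => _; last first.
  by rewrite mul0rn big1 // => b; rewrite andbF.
under eq_bigr => b _ do rewrite andbT.
by rewrite -big_mkcond sumr_const card_kermx.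
Qed.

Lemma E_sum_rank_eq : \rank T = r ->
  E_sum r f T = mu q (srk T) * (q ^ \rank T)%:Z * f (\rank T).
Proof.
move=> rank_eq.
rewrite E_sum_ext_term sum_ext_term0 sum_ext_term1 -rank_eq ltnn.
by rewrite !mul0rn !addr0 -mulr_natr natz mulrAC.
Qed.

Lemma E_sum_rank_lt : (\rank T < r)%N ->
  E_sum r f T =
    mu q (srk T) * (q ^ \rank T)%:Z * (f (\rank T) - f (\rank T).+1).
Proof.
move=> rank_lt.
rewrite E_sum_ext_term sum_ext_term0 sum_ext_term1 rank_lt mu_succ.
have q_gt0 : (0 < q)%N by rewrite ltnW ?card_finNzRing_gt1.
have qm_ge : (q ^ \rank T <= q ^ m)%N by rewrite leq_pexp2l ?rank_leq_row.
have qm_split : (q ^ m = q ^ srk T * q ^ (m - srk T))%N.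
  by rewrite -expnD subnKC ?rank_leq_row.
by rewrite !pmulrn !mulrzz -subzn // qm_split PoszM; ring.
Qed.

End ExtensionSum.

Theorem proposition3p5 (F : finFieldType) (m r : nat) (T : 'M[F]_m)
  (f : nat -> int) :
  semi_idempotent T -> (\rank T <= r)%N ->
  ((\rank T < r)%N ->
     E_sum r f T = mu #|F| (srk T) * (#|F| ^ \rank T)%:Z
                   * (f (\rank T) - f (\rank T).+1)) /\
  (\rank T = r ->
     E_sum r f T = mu #|F| (srk T) * (#|F| ^ \rank T)%:Z * f (\rank T)).
Proof.
move=> /(semi_idempotentP _ (leqnn _)) fix_T rank_T.
by split; [apply: E_sum_rank_lt | apply: E_sum_rank_eq].
Qed.
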